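(* Suppose we have $2$ agents with additive, identical, normalized valuations, provided with a prediction of accuracy $\eta<1-\frac{1-a}{\min\{2a(2+a),4\}}$ for some given $a\in(\varphi-1,1]$, where $\varphi=\frac{1+\sqrt5}{2}$; that is, the allowed error between the prediction and the true valuation is $D=1-\eta>\frac{1-a}{\min\{2a(2+a),4\}}$. Then there is no online algorithm that guarantees an $a$-EFX allocation for all instances with error at most $D$, even when $T'=T=4$ and the prediction and the true valuation are $4$-value functions.
   Context: Online fair division with predictions and identical valuations: goods $g_1,\dots,g_T$ arrive one per time step; all agents share a true additive normalized valuation $v$ ($v(g_t)\ge0$, $\sum_{t\in[T]}v(g_t)=1$, $v(S)=\sum_{g\in S}v(g)$), and before any arrival the algorithm receives a prediction $p=(p(g_1),\dots,p(g_{T'}))$ (an additive normalized valuation over $T'$ predicted goods) and the accuracy level. Error $D'=\frac12\sum_{t=1}^{\max\{T,T'\}}|p(g_t)-v(g_t)|$ (missing entries set to $0$); accuracy $\eta$ means the error is at most $1-\eta$. At time $t$, $v(g_t)$ is revealed and $g_t$ must be irrevocably allocated. For $S\ne\emptyset$, $\bar S=S\setminus\{g\}$ with $g\in\arg\max_{g'\in S}v(S\setminus\{g'\})$, $\bar\emptyset=\emptyset$. An allocation is $a$-EFX if $v(A_i)\ge a\cdot v(\bar A_j)$ for all $i,j$. A function is $k$-value if it takes at most $k$ distinct values. *)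

From HB Require Import structures.
From mathcomp Require Import all_boot all_order all_algebra.
Set Implicit Arguments. Unset Strict Implicit. Unset Printing Implicit Defensive.
Import Order.TTheory GRing.Theory Num.Theory.
Local Open Scope ring_scope.

(* Goods g_1..g_T are indexed by 'I_T (g_{t+1} <-> ordinal t). *)

Definition val_of (R : numDomainType) (T : nat) (v : 'I_T -> R) (S : {set 'I_T}) : R :=
  \sum_(g in S) v g.

Definition normalized (R : numDomainType) (T : nat) (v : 'I_T -> R) : Prop :=
  (forall g, 0 <= v g) /\ \sum_(g < T) v g = 1.

Definition k_value (R : numDomainType) (T : nat) (k : nat) (v : 'I_T -> R) : Prop :=
  (size (undup [seq v g | g <- enum 'I_T]) <= k)%N.

(* v(bar S), where bar S = S \ {g} with g in argmax_{g' in S} v(S \ {g'}),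
   and bar emptyset = emptyset; so v(bar S) = max_{g in S} v(S \ {g})
   (and 0 for S empty). *)
Definition val_bar (R : realDomainType) (T : nat) (v : 'I_T -> R) (S : {set 'I_T}) : R :=
  \big[Num.max/0]_(g in S) val_of v (S :\ g).

Definition a_EFX (R : realDomainType) (T : nat) (v : 'I_T -> R) (a : R)
  (A : bool -> {set 'I_T}) : Prop :=
  forall i j : bool, a * val_bar v (A j) <= val_of v (A i).

Definition pred_error (R : numFieldType) (T : nat) (p v : 'I_T -> R) : R :=
  2^-1 * \sum_(t < T) `|p t - v t|.

(* An online (deterministic) algorithm for 2 agents: given the prediction p
   and the values v(g_1),...,v(g_t) revealed so far (the last one being the
   current good g_t), it decides which agent (true / false) receives g_t. *)
Definition online_alg (R : Type) (T : nat) := ('I_T -> R) -> seq R -> bool.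

Definition revealed (R : Type) (T : nat) (v : 'I_T -> R) (t : 'I_T) : seq R :=
  [seq v g | g <- enum 'I_T & (nat_of_ord g <= nat_of_ord t)%N].

Definition run_alg (R : Type) (T : nat) (alg : online_alg R T) (p v : 'I_T -> R)
  : bool -> {set 'I_T} :=
  fun i => [set t : 'I_T | alg p (revealed v t) == i].

From HB Require Import structures.
From mathcomp Require Import all_boot all_order all_algebra.
From mathcomp Require Import ring lra.
Import Order.TTheory GRing.Theory Num.Theory.
Set Implicit Arguments. Unset Strict Implicit. Unset Printing Implicit Defensive.
Local Open Scope ring_scope.

(* Let p = (x, y, (h + w)/2, (3h - w)/2) be the midpoint of vb = (x, y, h, h)
   and vs = (x, y, w, 2h - w).  Both valuations are at error (h - w)/2 from p
   and agree on g1, g2, so an online algorithm allocates g1 and g2 identically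
   under both.  If it gives them to the same agent, every allocation of g3, g4
   under vb violates a-EFX; if it separates them, every allocation under vs
   does, provided (x, y, h, w) satisfies four strict linear envy inequalities.
   Their non-strict versions hold at (k - 1 - a, 1 - a, a, 2a - 1)/k with
   k = min(a(2 + a), 2), of error (1 - a)/(2k); the strict ones hold at
   (0, y, (1 - y)/2, 0) for (1 - a)/(1 + a) < y < a/(2 + a), an interval that
   is nonempty exactly when a^2 + a > 1.  Since the constraints are linear,
   every point of the segment between the two other than the first one is
   strict, and those near the first one have error as close to (1 - a)/(2k)
   as we please. *)

Definition alloc (T : nat) (c : 'I_T -> bool) : bool -> {set 'I_T} :=
  fun i => [set t | c t == i].

Lemma eq_revealed (R : Type) (T : nat) (v v' : 'I_T -> R) (t : 'I_T) :
  (forall g : 'I_T, (g <= t)%N -> v g = v' g) -> revealed v t = revealed v' t.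
Proof. by move=> eq_v; apply/eq_in_map => g; rewrite mem_filter => /andP[/eq_v]. Qed.

Lemma k_value_ord (R : numDomainType) (T : nat) (v : 'I_T -> R) : k_value T v.
Proof. by rewrite /k_value (leq_trans (size_undup _)) // size_map size_enum_ord. Qed.

Lemma not_a_EFX_alloc (R : realDomainType) (T : nat) (v : 'I_T -> R) (a : R)
    (c : 'I_T -> bool) (i j : bool) (g : 'I_T) :
  0 <= a -> c g = j -> val_of v (alloc c i) < a * (val_of v (alloc c j) - v g) ->
  ~ a_EFX v a (alloc c).
Proof.
move=> a_ge0 cg envy /(_ i j); apply/negP; rewrite -ltNge (lt_le_trans envy) //.
have gA : g \in alloc c j by rewrite inE cg.
rewrite ler_wpM2l // /val_of (big_setD1 g gA) /= addrC addrK.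
by rewrite /val_bar (bigD1 g gA) /= le_max lexx.
Qed.
Arguments not_a_EFX_alloc {R T v a c} i j g.

Section FourGoods.
Variable R : realFieldType.

Definition g1 : 'I_4 := Ordinal (isT : 0 < 4)%N.
Definition g2 : 'I_4 := Ordinal (isT : 1 < 4)%N.
Definition g3 : 'I_4 := Ordinal (isT : 2 < 4)%N.
Definition g4 : 'I_4 := Ordinal (isT : 3 < 4)%N.

Definition vals4 (x y z u : R) : 'I_4 -> R := fun t => [:: x; y; z; u]`_t.

Lemma sum_ord4 (F : 'I_4 -> R) : \sum_(t < 4) F t = F g1 + F g2 + F g3 + F g4.
Proof.
rewrite !big_ord_recr big_ord0 /= add0r.
by congr (_ + _ + _ + _); congr F; apply: val_inj.
Qed.

Lemma val_of_alloc4 (v : 'I_4 -> R) (c : 'I_4 -> bool) (i : bool) :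
  val_of v (alloc c i) =
  (if c g1 == i then v g1 else 0) + (if c g2 == i then v g2 else 0) +
  (if c g3 == i then v g3 else 0) + (if c g4 == i then v g4 else 0).
Proof. by rewrite /val_of big_mkcond sum_ord4 !inE. Qed.

Lemma normalized_vals4 (x y z u : R) :
  0 <= x -> 0 <= y -> 0 <= z -> 0 <= u -> x + y + z + u = 1 ->
  normalized (vals4 x y z u).
Proof.
move=> *; split; last by rewrite sum_ord4 /vals4 /=.
by case=> -[|[|[|[|n]]]] //= _; rewrite /vals4 /=.
Qed.

Lemma pred_error_vals4 (x y z u x' y' z' u' : R) :
  pred_error (vals4 x y z u) (vals4 x' y' z' u') =
  2^-1 * (`|x - x'| + `|y - y'| + `|z - z'| + `|u - u'|).
Proof. by rewrite /pred_error sum_ord4 /vals4 /=. Qed.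

Lemma bundled_not_a_EFX (a x y h : R) (c : 'I_4 -> bool) :
  0 <= a -> 0 <= x -> 0 <= y -> h < a * (y + h) -> x + y < a * h -> c g1 = c g2 ->
  ~ a_EFX (vals4 x y h h) a (alloc c).
Proof.
move=> a_ge0 x_ge0 y_ge0 envy_one envy_pair; have ay_ge0 := mulr_ge0 a_ge0 y_ge0.
(* The eight cases list (c g1, c g3, c g4) lexicographically, true first; the
   witness (i, j, g) says that agent i envies agent j's bundle without g. *)
case E1 : (c g1); case E2 : (c g2) => // _; case E3 : (c g3); case E4 : (c g4);
  [ apply: (not_a_EFX_alloc false true g1)
  | apply: (not_a_EFX_alloc false true g1)
  | apply: (not_a_EFX_alloc false true g1)
  | apply: (not_a_EFX_alloc true false g3)
  | apply: (not_a_EFX_alloc false true g3)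
  | apply: (not_a_EFX_alloc true false g1)
  | apply: (not_a_EFX_alloc true false g1)
  | apply: (not_a_EFX_alloc true false g1) ];
  rewrite // !val_of_alloc4 E1 E2 E3 E4 /vals4 /=; lra.
Qed.

Lemma separated_not_a_EFX (a x y h w : R) (c : 'I_4 -> bool) :
  0 <= a -> 0 <= x -> 0 <= y -> x + y < a * h ->
  x + w < a * (2 * h - w) -> y + w < a * (2 * h - w) -> c g1 != c g2 ->
  ~ a_EFX (vals4 x y w (2 * h - w)) a (alloc c).
Proof.
move=> a_ge0 x_ge0 y_ge0 envy_pair envy_13 envy_23.
case E1 : (c g1); case E2 : (c g2) => // _; case E3 : (c g3); case E4 : (c g4);
  [ apply: (not_a_EFX_alloc false true g1)
  | apply: (not_a_EFX_alloc true false g2)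
  | apply: (not_a_EFX_alloc false true g1)
  | apply: (not_a_EFX_alloc true false g2)
  | apply: (not_a_EFX_alloc false true g2)
  | apply: (not_a_EFX_alloc true false g1)
  | apply: (not_a_EFX_alloc false true g2)
  | apply: (not_a_EFX_alloc true false g1) ];
  rewrite // !val_of_alloc4 E1 E2 E3 E4 /vals4 /=; lra.
Qed.

Definition instance_params (x y h w : R) :=
  [/\ 0 <= x, 0 <= y, 0 <= w, w <= h & x + y + 2 * h = 1].

Definition envy_le (a x y h w : R) :=
  [/\ h <= a * (y + h), x + y <= a * h,
      x + w <= a * (2 * h - w) & y + w <= a * (2 * h - w)].

Definition envy_lt (a x y h w : R) :=
  [/\ h < a * (y + h), x + y < a * h,
      x + w < a * (2 * h - w) & y + w < a * (2 * h - w)].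

Definition hard_prediction (x y h w : R) : 'I_4 -> R :=
  vals4 x y ((h + w) / 2) ((3 * h - w) / 2).

Lemma online_alg_fooled (a x y h w : R) (alg : online_alg R 4) (p : 'I_4 -> R) :
  0 <= a -> instance_params x y h w -> envy_lt a x y h w ->
  ~ a_EFX (vals4 x y h h) a (run_alg alg p (vals4 x y h h)) \/
  ~ a_EFX (vals4 x y w (2 * h - w)) a (run_alg alg p (vals4 x y w (2 * h - w))).
Proof.
move=> a_ge0 [x_ge0 y_ge0 _ _ _] [envy_one envy_pair envy_13 envy_23].
pose c (v : 'I_4 -> R) (t : 'I_4) := alg p (revealed v t).
have same_start (t : 'I_4) :
    (t <= 1)%N -> c (vals4 x y h h) t = c (vals4 x y w (2 * h - w)) t.
  move=> t_le1; rewrite /c; congr (alg p _).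
  apply: eq_revealed => -[[|[|n]] ?] //= g_le_t.
  by move: (leq_trans g_le_t t_le1).
have [bundled | separated] := eqVneq (c (vals4 x y h h) g1) (c (vals4 x y h h) g2).
  by left; apply: (bundled_not_a_EFX (c := c (vals4 x y h h))).
right; apply: (separated_not_a_EFX (c := c (vals4 x y w (2 * h - w)))) => //.
by rewrite -!same_start.
Qed.

Lemma hard_instances_normalized (x y h w : R) : instance_params x y h w ->
  [/\ normalized (hard_prediction x y h w),
      normalized (vals4 x y h h) & normalized (vals4 x y w (2 * h - w))].
Proof. by case=> *; split; apply: normalized_vals4; lra. Qed.

Lemma hard_instances_error (x y h w : R) : w <= h ->
  pred_error (hard_prediction x y h w) (vals4 x y h h) = (h - w) / 2 /\
  pred_error (hard_prediction x y h w) (vals4 x y w (2 * h - w))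
    = (h - w) / 2.
Proof.
move=> w_le_h; split; rewrite /hard_prediction pred_error_vals4 !subrr normr0.
  by rewrite ler0_norm ?ger0_norm; lra.
by rewrite ger0_norm ?ler0_norm; lra.
Qed.

Definition mix (l u v : R) := (1 - l) * u + l * v.

Lemma mix_le (l u u' v v' : R) :
  0 <= l <= 1 -> u <= u' -> v <= v' -> mix l u v <= mix l u' v'.
Proof. by case/andP=> *; rewrite /mix lerD // ler_wpM2l // subr_ge0. Qed.

Lemma mix_lt (l u u' v v' : R) :
  0 < l <= 1 -> u <= u' -> v < v' -> mix l u v < mix l u' v'.
Proof. by case/andP=> *; rewrite /mix ler_ltD ?ltr_pM2l // ler_wpM2l // subr_ge0. Qed.

Lemma instance_params_mix (l xb yb hb wb xq yq hq wq : R) : 0 <= l <= 1 ->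
  instance_params xb yb hb wb -> instance_params xq yq hq wq ->
  instance_params (mix l xb xq) (mix l yb yq) (mix l hb hq) (mix l wb wq).
Proof.
move=> l01 [xb_ge0 yb_ge0 wb_ge0 wb_le sumB] [xq_ge0 yq_ge0 wq_ge0 wq_le sumQ].
have mix0 : mix l 0 0 = 0 by rewrite /mix; ring.
have mix_ge0 u v : 0 <= u -> 0 <= v -> 0 <= mix l u v.
  by move=> u_ge0 v_ge0; rewrite -[0]mix0; exact: mix_le.
split; [exact: mix_ge0 | exact: mix_ge0 | exact: mix_ge0 | exact: mix_le |].
have -> : mix l xb xq + mix l yb yq + 2 * mix l hb hq
          = mix l (xb + yb + 2 * hb) (xq + yq + 2 * hq) by rewrite /mix; ring.
by rewrite sumB sumQ /mix; ring.
Qed.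

Lemma envy_lt_mix (a l xb yb hb wb xq yq hq wq : R) : 0 < l <= 1 ->
  envy_le a xb yb hb wb -> envy_lt a xq yq hq wq ->
  envy_lt a (mix l xb xq) (mix l yb yq) (mix l hb hq) (mix l wb wq).
Proof.
move=> l01 [b1 b2 b3 b4] [q1 q2 q3 q4].
by split; [move: (mix_lt l01 b1 q1) | move: (mix_lt l01 b2 q2)
         | move: (mix_lt l01 b3 q3) | move: (mix_lt l01 b4 q4)]; rewrite /mix => ?; lra.
Qed.

Lemma envy_le_boundary (a k : R) :
  1 <= 2 * a -> a <= 1 -> 1 + a <= k -> k <= a * (2 + a) -> k <= 2 ->
  instance_params ((k - 1 - a) / k) ((1 - a) / k) (a / k) ((2 * a - 1) / k) /\
  envy_le a ((k - 1 - a) / k) ((1 - a) / k) (a / k) ((2 * a - 1) / k).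
Proof.
move=> a_ge a_le1 k_ge k_le_phi k_le2.
have k_gt0 : 0 < k by lra.
have ik_ge0 : 0 <= k^-1 by rewrite invr_ge0 ltW.
have kk : k / k = 1 by rewrite divff // gt_eqF.
have := ler_wpM2r ik_ge0 k_ge; have := ler_wpM2r ik_ge0 k_le_phi.
have := ler_wpM2r ik_ge0 k_le2; have := ler_wpM2r ik_ge0 a_le1.
have := ler_wpM2r ik_ge0 a_ge; move=> *.
by split; split; lra.
Qed.

Lemma exists_envy_le_boundary (a : R) : 0 < a <= 1 -> 0 <= a ^+ 2 + a - 1 ->
  exists x y h w, [/\ instance_params x y h w, envy_le a x y h w &
                      (h - w) / 2 = (1 - a) / Num.min (2 * a * (2 + a)) 4].
Proof.
case/andP=> a_gt0 a_le1 golden.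
set m := Num.min _ _.
have m_ge : 2 + 2 * a <= m by rewrite /m le_min; apply/andP; split; nra.
have m_le_phi : m <= 2 * a * (2 + a) by rewrite /m ge_min lexx.
have m_le4 : m <= 4 by rewrite /m ge_min lexx orbT.
have m_gt0 : 0 < m by lra.
have [a_ge k_ge k_le_phi k_le2] : [/\ 1 <= 2 * a, 1 + a <= m / 2,
    m / 2 <= a * (2 + a) & m / 2 <= 2] by split; nra.
have [paramsB envyB] := envy_le_boundary a_ge a_le1 k_ge k_le_phi k_le2.
exists ((m / 2 - 1 - a) / (m / 2)), ((1 - a) / (m / 2)), (a / (m / 2)),
  ((2 * a - 1) / (m / 2)).
by split => //; field; rewrite gt_eqF.
Qed.

Lemma exists_envy_lt_interior (a : R) : 0 < a <= 1 -> 0 < a ^+ 2 + a - 1 ->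
  exists y, instance_params 0 y ((1 - y) / 2) 0 /\ envy_lt a 0 y ((1 - y) / 2) 0.
Proof.
case/andP=> a_gt0 a_le1 golden.
have lt_ends : (1 - a) / (1 + a) < a / (2 + a).
  have a1_gt0 : 0 < 1 + a by lra.
  have a2_gt0 : 0 < 2 + a by lra.
  by rewrite ltr_pdivrMr // mulrAC ltr_pdivlMr //; nra.
have [lo hi] := midf_lt lt_ends; set y := (_ + _) / 2 in lo hi.
have ends_ge0 : 0 <= (1 - a) / (1 + a) by rewrite divr_ge0 //; lra.
have y_ge0 : 0 <= y by lra.
have lo' : 1 - a < y * (1 + a) by rewrite -ltr_pdivrMr //; lra.
have hi' : y * (2 + a) < a by rewrite -ltr_pdivlMr //; lra.
have ay_ge0 := mulr_ge0 (ltW a_gt0) y_ge0.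
by exists y; split; split; lra.
Qed.

Lemma exists_envy_lt_params (a D : R) : 0 < a <= 1 -> 0 < a ^+ 2 + a - 1 ->
  (1 - a) / Num.min (2 * a * (2 + a)) 4 < D ->
  exists x y h w, [/\ instance_params x y h w, envy_lt a x y h w & (h - w) / 2 <= D].
Proof.
move=> a01 golden lt_D.
have [xb [yb [hb [wb [paramsB envyB errB]]]]] := exists_envy_le_boundary a01 (ltW golden).
have [y [paramsQ envyQ]] := exists_envy_lt_interior a01 golden.
pose l := Num.min 1 (D - (hb - wb) / 2).
have l_gt0 : 0 < l by rewrite /l lt_min ltr01 subr_gt0 /=; lra.
have l_le1 : l <= 1 by rewrite /l ge_min lexx.
have l_le : l <= D - (hb - wb) / 2 by rewrite /l ge_min lexx orbT.
have l01 : 0 < l <= 1 by rewrite l_gt0.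
have l01w : 0 <= l <= 1 by rewrite (ltW l_gt0).
exists (mix l xb 0), (mix l yb y), (mix l hb ((1 - y) / 2)), (mix l wb 0).
split; [exact: instance_params_mix l01w paramsB paramsQ
      | exact: envy_lt_mix l01 envyB envyQ |].
case: paramsB paramsQ => _ _ _ wb_le _ [_ y_ge0 _ _ _].
have eB_ge0 : 0 <= hb - wb by lra.
have eQ_le1 : (1 - y) / 2 <= 1 by lra.
have := mulr_ge0 (ltW l_gt0) eB_ge0; have := ler_wpM2l (ltW l_gt0) eQ_le1.
rewrite /mix => *; lra.
Qed.

End FourGoods.

Lemma golden_ratio_lt (R : rcfType) (a : R) :
  (Num.sqrt 5 - 1) / 2 < a -> 0 < a /\ 0 < a ^+ 2 + a - 1.
Proof.
have s_ge0 : 0 <= Num.sqrt (5 : R) := sqrtr_ge0 _.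
have s_sq : Num.sqrt (5 : R) ^+ 2 = 5 by rewrite sqr_sqrtr.
by rewrite ltr_pdivrMr // => lt_a; split; nra.
Qed.

Theorem theorem4p6 (R : rcfType) (a eta : R) :
  (Num.sqrt 5 - 1) / 2 < a -> a <= 1 ->
  eta < 1 - (1 - a) / Num.min (2 * a * (2 + a)) 4 ->
  forall alg : online_alg R 4,
  exists p v : 'I_4 -> R,
    normalized p /\ normalized v /\ k_value 4 p /\ k_value 4 v /\
    pred_error p v <= 1 - eta /\ ~ a_EFX v a (run_alg alg p v).
Proof.
move=> a_gt a_le1 eta_lt alg.
have [a_gt0 golden] := golden_ratio_lt a_gt.
have lt_D : (1 - a) / Num.min (2 * a * (2 + a)) 4 < 1 - eta by lra.
have a01 : 0 < a <= 1 by rewrite a_gt0.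
have [x [y [h [w [params envy err]]]]] := exists_envy_lt_params a01 golden lt_D.
have [Np Nb Ns] := hard_instances_normalized params.
have [_ _ _ w_le_h _] := params.
have [Eb Es] := hard_instances_error x y w_le_h.
pose p := hard_prediction x y h w.
have [fail | fail] := online_alg_fooled alg p (ltW a_gt0) params envy.
- exists p, (vals4 x y h h); rewrite Eb.
  exact: (conj Np (conj Nb (conj (k_value_ord _) (conj (k_value_ord _) (conj err fail))))).
- exists p, (vals4 x y w (2 * h - w)); rewrite Es.
  exact: (conj Np (conj Ns (conj (k_value_ord _) (conj (k_value_ord _) (conj err fail))))).
Qed.
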